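(* Let $\ell\ge 3$ be prime. Let $r,s,t$ be positive integers with $\gcd(r,s,t)=1$. Let $q=2k\ell+1$ be a prime (with $k$ a positive integer) that does not divide $r$. Define \[ \mu(\ell,q)=\{\eta^{2\ell}:\eta\in\mathbb{F}_q\}=\{0\}\cup\{\zeta\in\mathbb{F}_q^*:\zeta^k=1\} \] and \[ B(\ell,q)=\left\{\zeta\in\mu(\ell,q): \big((s\zeta+t)/r\big)^{2k}\in\{0,1\}\right\}\subseteq \mathbb{F}_q . \] If $B(\ell,q)=\emptyset$, then the equation $r y_2^\ell-s y_1^{2\ell}=t$ has no solutions in integers $y_1,y_2$. *)

From HB Require Import structures.
From mathcomp Require Import all_boot all_order all_algebra.
Set Implicit Arguments. Unset Strict Implicit. Unset Printing Implicit Defensive.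
Import Order.TTheory GRing.Theory Num.Theory.
Local Open Scope ring_scope.

Definition mu (l q : nat) : {set 'F_q} :=
  [set eta ^+ (2 * l) | eta in [set: 'F_q]].

Definition B (l q k r s t : nat) : {set 'F_q} :=
  [set zeta in mu l q |
     let w := ((s%:R * zeta + t%:R) / r%:R) ^+ (2 * k) in (w == 0) || (w == 1)].

(* Reduce a solution modulo q. Then zeta := y1^(2l) lies in mu(l,q) and
   (s zeta + t)/r = y2^l, so ((s zeta + t)/r)^(2k) = y2^(q-1), which is 0 or 1
   by Fermat's little theorem. Hence zeta lies in B(l,q), which is empty. *)

From HB Require Import structures.
From mathcomp Require Import all_boot all_order all_algebra all_field.
Import Order.TTheory GRing.Theory Num.Theory.
Local Open Scope ring_scope.

Lemma expf_card_pred (F : finFieldType) (x : F) : x ^+ #|F|.-1 = (x != 0)%:R.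
Proof.
have card_gt1 : (1 < #|F|)%N.
  by rewrite (cardD1 0) (cardD1 1) !inE oner_neq0.
have [->|x_nz] := eqVneq x 0; first by rewrite expr0n -subn1 subn_eq0 leqNgt card_gt1.
apply: (mulfI x_nz); rewrite mulr1 -exprS prednK ?expf_card //.
exact: ltnW.
Qed.

Lemma card_Fp_pred {q k l : nat} :
  q = (2 * k * l + 1)%N -> prime q -> #|'F_q|.-1 = (l * (2 * k))%N.
Proof. by move=> q_def q_prime; rewrite card_Fp // q_def addn1 mulnC. Qed.

Lemma solution_mod_in_B {l r s t q k : nat} {y1 y2 : int} :
  q = (2 * k * l + 1)%N -> prime q -> ~~ (q %| r)%N ->
  r%:Z * y2 ^+ l - s%:Z * y1 ^+ (2 * l) = t%:Z ->
  (y1%:~R : 'F_q) ^+ (2 * l) \in B l q k r s t.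
Proof.
move=> q_def q_prime q_ndvd_r eq_int.
set x1 : 'F_q := y1%:~R; set x2 : 'F_q := y2%:~R.
have eq_Fq : r%:R * x2 ^+ l - s%:R * x1 ^+ (2 * l) = t%:R :> 'F_q.
  by have := congr1 (intmul (1 : 'F_q)) eq_int; rewrite rmorphB !rmorphM !rmorphXn.
have r_nz : r%:R != 0 :> 'F_q by rewrite -(dvdn_pcharf (pchar_Fp q_prime)).
rewrite inE (imset_f (fun eta => eta ^+ (2 * l))) ?inE //=.
have -> : (s%:R * x1 ^+ (2 * l) + t%:R) / r%:R = x2 ^+ l.
  by rewrite -eq_Fq addrC addrNK mulrC mulKf.
rewrite -exprM -(card_Fp_pred q_def q_prime) expf_card_pred.
by case: (x2 != 0); rewrite eqxx ?orbT.
Qed.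

Theorem lemma6p1 (l r s t q k : nat) :
  prime l -> (3 <= l)%N ->
  (0 < r)%N -> (0 < s)%N -> (0 < t)%N ->
  gcdn (gcdn r s) t = 1%N ->
  (0 < k)%N -> q = (2 * k * l + 1)%N -> prime q -> ~~ (q %| r)%N ->
  B l q k r s t = set0 ->
  ~ (exists y1 y2 : int,
       (r%:Z) * y2 ^+ l - (s%:Z) * y1 ^+ (2 * l) = t%:Z).
Proof.
move=> _ _ _ _ _ _ _ q_def q_prime q_ndvd_r B_empty [y1 [y2 eq_int]].
have := solution_mod_in_B q_def q_prime q_ndvd_r eq_int.
by rewrite B_empty inE.
Qed.
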